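(* Let $Z$ and $V$ be real Banach spaces, where the norm of $Z$ is Fréchet differentiable away from zero. Let $D \subset Z$ be open, $r \in Z$, and let $F: D \to V$ be semismooth at $z \in D$, $z \neq r$, with Newton derivative $H_F$. Let $p \ge 1$ and $\sigma \ge 0$, and define $$M(z;r) = \left(\frac{1}{\|z-r\|_Z^p} + \sigma\right)\mathcal{I}_V,$$ where $\mathcal{I}_V$ is the identity on $V$. Then $G(z) = M(z;r)F(z)$ is also semismooth at $z$, with Newton derivative acting by $$H_G(z)h = \left(\sigma + \frac{1}{\|z-r\|_Z^p}\right)H_F(z)h - p\,\frac{\langle z^*, h\rangle_{Z^*,Z}}{\|z-r\|_Z^{p+1}}\,F(z),$$ where $z^* \in Z^*$ is the derivative of the norm $\|\cdot\|_Z$ at $z - r$, i.e.\ satisfies $\|z^*\|_{Z^*} \le 1$ and $\langle z^*, z-r\rangle_{Z^*,Z} = \|z-r\|_Z$.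
   Context: Semismoothness: $F: D \subset Z \to V$ ($D$ open) is semismooth at $z \in D$ if it is locally Lipschitz continuous at $z$ and there exist an open neighbourhood $N \subset D$ containing $z$ and a mapping $H: D \to L(Z,V)$ (a Newton derivative) such that $F(w+h) - F(w) - H(w+h)h = o(\|h\|_Z)$ as $h \to 0$, for all $w \in N$. The paper assumes throughout that the norm on $Z$ is Fréchet differentiable away from zero. *)

From HB Require Import structures.
From mathcomp Require Import all_boot all_order all_algebra.
From mathcomp Require Import all_classical all_reals all_analysis.
Set Implicit Arguments. Unset Strict Implicit. Unset Printing Implicit Defensive.
Import Order.TTheory GRing.Theory Num.Theory.
Import numFieldNormedType.Exports.
Local Open Scope classical_set_scope.
Local Open Scope ring_scope.

Section Semismooth.
Context {R : realType} {Z V : normedModType R}.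

Definition locally_lipschitz_at (D : set Z) (F : Z -> V) (z : Z) : Prop :=
  exists2 eps : R, 0 < eps &
    (forall x, `|x - z| < eps -> D x) /\
    exists L : R, forall x y : Z, `|x - z| < eps -> `|y - z| < eps ->
      `|F x - F y| <= L * `|x - y|.

Definition bounded_linear (T : Z -> V) : Prop := linear T /\ continuous T.

Definition newton_derivative_near (D : set Z) (F : Z -> V) (z : Z)
    (H : Z -> Z -> V) : Prop :=
  exists N : set Z, [/\ open N, N z, N `<=` D &
    forall w, N w -> forall eps : R, 0 < eps ->
      exists2 delta : R, 0 < delta & forall h : Z, `|h| < delta ->
        `|F (w + h) - F w - H (w + h) h| <= eps * `|h| ].

Definition semismooth_with (D : set Z) (F : Z -> V) (z : Z)
    (H : Z -> Z -> V) : Prop :=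
  [/\ D z, locally_lipschitz_at D F z,
      (forall w, D w -> bounded_linear (H w)) &
      newton_derivative_near D F z H].

End Semismooth.

(* Write G = m F with the scalar factor m(w) = phi(|w - r|), phi(t) = t^-p + sigma.
   The norm is convex, so at a point y + h where it is differentiable its
   derivative is trapped by the subgradient inequalities between the first
   differences at y and at y + h; the second difference at y is o(|h|) because
   the norm is differentiable at y != 0, hence the derivative of the norm is a
   Newton derivative of the norm away from 0.  Since phi is C^1 on (0, +oo),
   a chain rule gives the semismoothness of m at z != r with Newton derivative
   phi'(|w - r|) d|.|(w - r).  A product rule then finishes: in
   m F (w + h) - m F (w) the cross term H_m(w + h) h (F (w + h) - F w) is
   O(|h|^2) because m and F are Lipschitz near z. *)

From HB Require Import structures.
From mathcomp Require Import all_boot all_order all_algebra.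
From mathcomp Require Import all_classical all_reals all_analysis.
From mathcomp Require Import ring lra.
Set Implicit Arguments. Unset Strict Implicit. Unset Printing Implicit Defensive.
Import Order.TTheory GRing.Theory Num.Theory.
Import numFieldNormedType.Exports.
Local Open Scope classical_set_scope.
Local Open Scope ring_scope.

Section Differential.
Context {R : realType} {V W : normedModType R}.

Lemma differentiable_approx (f : V -> W) (y : V) : differentiable f y ->
  forall e : R, 0 < e ->
  \forall h \near 0, `|f (y + h) - f y - 'd f y h| <= e * `|h|.
Proof.
move=> df e e0; have /eqaddoP/(_ e e0) := diff_locally df.
by apply: filterS => h /=; rewrite !fctE opprD addrA (addrC h y).
Qed.

(* Also where [f] is not differentiable at [y]: ['d f y] is then a constant
   junk value.  This matters for the Newton derivative of [|. - r|] at [r]. *)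
Lemma continuous_diff (f : V -> W) (y : V) : continuous ('d f y).
Proof.
rewrite /diff; set P := (fun df : {linear V -> W} => _).
have [ex|nex] := pselect (exists df, P df); first by have [] := xgetPex point ex.
rewrite xgetPN; last by move=> df Pdf; apply: nex; exists df.
by move=> x; apply: cvg_cst.
Qed.

End Differential.

Section NewtonDerivative.
Context {R : realType} {Z V : normedModType R}.

Definition newton_at (F : Z -> V) (H : Z -> Z -> V) (w : Z) : Prop :=
  forall e : R, 0 < e ->
  \forall h \near 0, `|F (w + h) - F w - H (w + h) h| <= e * `|h|.

Lemma newton_derivative_nearP (D : set Z) (F : Z -> V) (z : Z)
    (H : Z -> Z -> V) :
  newton_derivative_near D F z H <->
  exists N : set Z, [/\ open N, N z, N `<=` D &
    forall w, N w -> newton_at F H w].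
Proof.
have epsP w : newton_at F H w <-> forall e : R, 0 < e ->
    exists2 d : R, 0 < d & forall h : Z, `|h| < d ->
      `|F (w + h) - F w - H (w + h) h| <= e * `|h|.
  by split=> + e e0 => /(_ e e0) /nbhs_norm0P.
by split=> -[N [oN Nz ND newtonN]]; exists N; split=> // w /newtonN /epsP.
Qed.

End NewtonDerivative.

Section Lipschitz.
Context {R : realType} {Z V : normedModType R}.
Implicit Types (F : Z -> V) (z w : Z) (e L : R).

Lemma locally_lipschitz_atP (D : set Z) F z :
  locally_lipschitz_at D F z <->
  exists2 e, 0 < e & ball z e `<=` D /\
    exists2 L, 0 <= L & L.-lipschitz_(ball z e) F.
Proof.
have ballE e x : ball z e x = (`|x - z| < e) by rewrite -ball_normE /= distrC.
split=> -[e e0 [eD]].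
  move=> [L FL]; exists e => //; split=> [x|]; first by rewrite ballE; apply: eD.
  exists `|L| => // -[x y] [/=]; rewrite !ballE => xz yz.
  by apply: le_trans (FL _ _ xz yz) _; rewrite ler_wpM2r // ler_norm.
move=> [L L0 FL]; exists e => //; split=> [x|]; first by rewrite -ballE; apply: eD.
by exists L => x y; rewrite -!ballE => xz yz; apply: (FL (x, y)).
Qed.

Lemma klipschitzS (A B : set Z) F L :
  B `<=` A -> L.-lipschitz_A F -> L.-lipschitz_B F.
Proof. by move=> BA FA [x y] [Bx By]; apply: FA; split; apply: BA. Qed.

Lemma klipschitz_ball_norm_le F z e L : 0 <= L ->
  L.-lipschitz_(ball z e) F -> forall x, ball z e x -> `|F x| <= `|F z| + L * e.
Proof.
move=> L0 FL x zx; have zz : ball z e z.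
  by apply: ballxx; move: zx; rewrite -ball_normE; apply: le_lt_trans.
have -> : F x = F z + (F x - F z) by rewrite addrC subrK.
apply: le_trans (ler_normD _ _) _; rewrite lerD2l.
apply: le_trans (FL (x, z) (conj zx zz)) _; rewrite ler_wpM2l //.
by move: zx; rewrite -ball_normE /= distrC => /ltW.
Qed.

Lemma near_ball_shift z e w : ball z e w -> \forall h \near 0, ball z e (w + h).
Proof.
by move=> zw; apply: (nbhs0P _ w).1; apply: open_nbhs_nbhs; split=> //; exact: ball_open.
Qed.

Lemma klipschitz_near F z e L w : L.-lipschitz_(ball z e) F -> ball z e w ->
  \forall h \near 0, `|F (w + h) - F w| <= L * `|h|.
Proof.
move=> FL zw; near=> h.
have zwh : ball z e (w + h) by near: h; apply: near_ball_shift.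
by have /= := FL (w + h, w) (conj zwh zw); rewrite addrAC subrr add0r.
Unshelve. all: by end_near.
Qed.

Lemma klipschitz_comp {W : normedModType R} (A : set Z) (B : set V)
    (f : V -> W) (g : Z -> V) (K L : R) :
  0 <= K -> K.-lipschitz_B f -> L.-lipschitz_A g -> (forall x, A x -> B (g x)) ->
  (K * L).-lipschitz_A (f \o g).
Proof.
move=> K0 fK gL AB [x y] /= [Ax Ay].
apply: le_trans (fK (g x, g y) (conj (AB x Ax) (AB y Ay))) _.
by rewrite -mulrA ler_wpM2l // (gL (x, y)).
Qed.

End Lipschitz.

Lemma scale_newton_remainder (R : pzRingType) (V : lmodType R)
    (a b c : R) (P Q H : V) :
  a *: P - b *: Q - (a *: H + c *: P) =
  a *: (P - Q - H) + (a - b - c) *: Q - c *: (P - Q).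
Proof.
rewrite !scalerBr !scalerBl opprB !addrA addrNK (addrAC (a *: P - a *: Q)).
by rewrite addrNK opprD addrA (addrAC (a *: P)).
Qed.

Section BoundedLinear.
Context {R : realType} {Z V : normedModType R}.
Implicit Types (T U : Z -> V) (S : Z -> R).

Lemma bounded_linearD T U :
  bounded_linear T -> bounded_linear U -> bounded_linear (fun h => T h + U h).
Proof.
move=> [lT cT] [lU cU]; split=> [k x y|x]; last exact: (continuousD (cT x) (cU x)).
by rewrite lT lU scalerDr addrACA.
Qed.

Lemma bounded_linearZ (a : R) T :
  bounded_linear T -> bounded_linear (fun h => a *: T h).
Proof.
move=> [lT cT]; split=> [k x y|x]; last exact: (continuousZ (cvg_cst a) (cT x)).
by rewrite lT scalerDr !scalerA mulrC.
Qed.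

Lemma bounded_linearZl S (v : V) :
  bounded_linear S -> bounded_linear (fun h => S h *: v).
Proof.
move=> [lS cS]; split=> [k x y|x]; last exact: (continuousZ (cS x) (cvg_cst v)).
by rewrite lS scalerDl scalerA.
Qed.

End BoundedLinear.

Section Product.
Context {R : realType} {Z V : normedModType R}.
Variables (m : Z -> R) (Hm : Z -> Z -> R) (F : Z -> V) (HF : Z -> Z -> V).

Lemma newton_at_scale (w : Z) (M Lm LF : R) :
  newton_at m Hm w -> newton_at F HF w ->
  (\forall h \near 0, `|m (w + h)| <= M) ->
  (\forall h \near 0, `|m (w + h) - m w| <= Lm * `|h|) ->
  (\forall h \near 0, `|F (w + h) - F w| <= LF * `|h|) ->
  newton_at (fun u => m u *: F u) (fun u h => m u *: HF u h + Hm u h *: F u) w.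
Proof.
move=> nm nF mM mL FL e e0.
have M0 : 0 <= M by have := nbhs_singleton mM; rewrite addr0; apply: le_trans.
pose C := M + `|F w| + 1; have C0 : 0 < C by rewrite ltr_wpDl // addr_ge0.
have e'0 : 0 < e / C by rewrite divr_gt0.
pose K := `|(Lm + 1) * LF| + 1; have K0 : 0 < K by rewrite ltr_wpDl.
near=> h.
have Em : `|m (w + h) - m w - Hm (w + h) h| <= e / C * `|h| by near: h; exact: nm.
have Em1 : `|m (w + h) - m w - Hm (w + h) h| <= 1 * `|h| by near: h; exact: nm.
have EF : `|F (w + h) - F w - HF (w + h) h| <= e / C * `|h| by near: h; exact: nF.
have mMh : `|m (w + h)| <= M by near: h.
have mLh : `|m (w + h) - m w| <= Lm * `|h| by near: h.
have FLh : `|F (w + h) - F w| <= LF * `|h| by near: h.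
have hK : `|h| <= e / C / K by near: h; apply: nbhs0_le; rewrite divr_gt0.
have cL : `|Hm (w + h) h| <= (Lm + 1) * `|h|.
  have := ler_normB (m (w + h) - m w) (m (w + h) - m w - Hm (w + h) h).
  by rewrite opprB addrC subrK; lra.
rewrite scale_newton_remainder.
apply: le_trans (ler_normB _ _) _; apply: le_trans (lerD (ler_normD _ _) (lexx _)) _.
rewrite !normrZ.
have t1 : `|m (w + h)| * `|F (w + h) - F w - HF (w + h) h| <= M * (e / C * `|h|).
  by apply: ler_pM.
have t2 : `|m (w + h) - m w - Hm (w + h) h| * `|F w| <= e / C * `|h| * `|F w|.
  by apply: ler_wpM2r.
have t3 : `|Hm (w + h) h| * `|F (w + h) - F w| <= e / C * `|h|.
  apply: le_trans (ler_pM (normr_ge0 _) (normr_ge0 _) cL FLh) _.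
  rewrite mulrACA mulrA ler_wpM2r //.
  apply: le_trans (_ : K * `|h| <= _); last by rewrite mulrC -ler_pdivlMr.
  by rewrite ler_wpM2r // (le_trans (ler_norm _)) // lerDl.
have -> : e = e / C * C by rewrite divfK // gt_eqF.
rewrite /C; lra.
Unshelve. all: by end_near.
Qed.

Lemma klipschitz_scale (A : set Z) (Mm MF Lm LF : R) :
  Lm.-lipschitz_A m -> LF.-lipschitz_A F ->
  (forall x, A x -> `|m x| <= Mm) -> (forall x, A x -> `|F x| <= MF) ->
  (Mm * LF + Lm * MF).-lipschitz_A (fun x => m x *: F x).
Proof.
move=> mL FL mM FM [x y] /= [Ax Ay].
have -> : m x *: F x - m y *: F y = m x *: (F x - F y) + (m x - m y) *: F y.
  by rewrite scalerBr scalerBl addrA subrK.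
apply: le_trans (ler_normD _ _) _; rewrite !normrZ mulrDl.
apply: lerD; first by rewrite -mulrA ler_pM // ?mM // (FL (x, y)).
by rewrite mulrAC ler_pM // ?FM // (mL (x, y)).
Qed.

Lemma semismooth_scale (D : set Z) (z : Z) :
  semismooth_with D m z Hm -> semismooth_with D F z HF ->
  semismooth_with D (fun u => m u *: F u) z
    (fun u h => m u *: HF u h + Hm u h *: F u).
Proof.
move=> [Dz /locally_lipschitz_atP [em em0 [emD [Lm Lm0 mL]]] Hm_lin].
move=> /newton_derivative_nearP [Nm [oNm Nmz NmD nm]].
move=> [_ /locally_lipschitz_atP [eF eF0 [_ [LF LF0 FL]]] HF_lin].
move=> /newton_derivative_nearP [NF [oNF NFz _ nF]].
pose e := Num.min em eF; have e0 : 0 < e by rewrite lt_min em0.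
have sub_em : ball z e `<=` ball z em by apply: le_ball; rewrite ge_min lexx.
have mL' := klipschitzS sub_em mL.
have FL' : LF.-lipschitz_(ball z e) F.
  by apply: klipschitzS FL; apply: le_ball; rewrite ge_min lexx orbT.
have mM := klipschitz_ball_norm_le Lm0 mL'.
have FM := klipschitz_ball_norm_le LF0 FL'.
split=> //.
- apply/locally_lipschitz_atP; exists e => //; split.
    by move=> x /sub_em /emD.
  exists ((`|m z| + Lm * e) * LF + Lm * (`|F z| + LF * e)).
    by rewrite addr_ge0 ?mulr_ge0 ?addr_ge0 ?mulr_ge0 // ltW.
  exact: klipschitz_scale.
- move=> w Dw; apply: bounded_linearD; first exact/bounded_linearZ/HF_lin.
  exact/bounded_linearZl/Hm_lin.
apply/newton_derivative_nearP; exists (Nm `&` NF `&` ball z e); split.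
- by apply: openI; [apply: openI|apply: ball_open].
- by split; [split|apply: ballxx].
- by move=> x [[/NmD]].
move=> w [[Nmw NFw] zw].
apply: (newton_at_scale (M := `|m z| + Lm * e)); [exact: nm|exact: nF| |
  exact: klipschitz_near mL' zw|exact: klipschitz_near FL' zw].
by near=> h; apply: mM; near: h; apply: near_ball_shift.
Unshelve. all: by end_near.
Qed.

End Product.

Section RealFunctions.
Context {R : realType}.
Implicit Types (f : R -> R) (a d x y : R).

Lemma MVT_ball f (f' : R -> R) a d x y :
  (forall t, ball a d t -> is_derive t 1 f (f' t)) ->
  ball a d x -> ball a d y ->
  exists2 c, ball a d c & f y - f x = f' c * (y - x).
Proof.
move=> df; wlog xy : x y / x <= y.
  move=> wlog bx b_y; have [xy|/ltW yx] := leP x y; first exact: wlog xy bx b_y.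
  have [c bc E] := wlog y x yx b_y bx; exists c => //.
  by rewrite -opprB E -mulrN opprB.
move=> bx b_y; have seg t : x <= t <= y -> ball a d t.
  move: bx b_y; rewrite -!ball_normE /= !ltr_distlC.
  by move=> /andP[? ?] /andP[? ?] /andP[? ?]; apply/andP; split; lra.
have [c cxy E] : exists2 c, c \in `[x, y] & f y - f x = f' c * (y - x).
  apply: MVT_segment => // [t|].
    by rewrite in_itv /= => /andP[xt ty]; apply/df/seg; rewrite !ltW.
  apply: continuous_in_subspaceT => t; rewrite inE /= in_itv /= => /seg/df.
  by case=> /derivable1_diffP/differentiable_continuous.
by exists c => //; apply: seg; move: cxy; rewrite in_itv.
Qed.

Lemma derive_lipschitz f (f' : R -> R) a d (K : R) :
  (forall t, ball a d t -> is_derive t 1 f (f' t)) ->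
  (forall t, ball a d t -> `|f' t| <= K) -> K.-lipschitz_(ball a d) f.
Proof.
move=> df f'K [x y] /= [bx b_y].
have [c bc ->] := MVT_ball df b_y bx.
by rewrite normrM ler_wpM2r // f'K.
Qed.

Lemma derive_newton f (f' : R -> R) a :
  (\forall t \near a, is_derive (t : R) 1 f (f' t)) -> {for a, continuous f'} ->
  forall e, 0 < e -> \forall b \near a, `|f b - f a - f' b * (b - a)| <= e * `|b - a|.
Proof.
move=> df cf e e0.
have : \forall t \near a, is_derive (t : R) 1 f (f' t) /\ `|f' a - f' t| <= e / 2.
  near=> t; split; first by near: t.
  by near: t; move/cvgrPdist_le: cf; apply; rewrite divr_gt0.
move=> /nbhs_ballP [d d0 Hd]; apply/nbhs_ballP; exists d => // b ab.
have [c /Hd [_ ac] ->] := MVT_ball (fun t bt => (Hd t bt).1) (ballxx a d0) ab.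
have [_ ab'] := Hd _ ab.
rewrite -mulrBl normrM ler_wpM2r //.
have := ler_distD (f' a) (f' c) (f' b); rewrite distrC in ac; lra.
Unshelve. all: by end_near.
Qed.

Lemma is_derive_powRV_add (p s x : R) : 0 < x ->
  is_derive x 1 (fun t => (t `^ p)^-1 + s) (- (p / x `^ (p + 1))).
Proof.
move=> x0; have xp0 : x `^ p != 0 by rewrite gt_eqF // powR_gt0.
have dV := @is_deriveV R (fun t => t `^ p) x _ _ xp0 (is_derive1_powR p x0).
apply: is_derive_eq; rewrite addr0 /GRing.scale /=.
have xn0 : x != 0 by rewrite gt_eqF.
rewrite powRB ?xn0 ?implybT // powRD ?xn0 ?implybT // powRr1 ?(ltW x0) //.
by field; rewrite xp0 xn0.
Qed.

Lemma continuous_powRV (p x : R) : 0 < x ->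
  {for x, continuous (fun t => - (p / t `^ (p + 1)))}.
Proof.
move=> x0; apply: continuousN; apply: continuousM; first exact: cvg_cst.
apply: continuousV; first by rewrite gt_eqF // powR_gt0.
apply/differentiable_continuous/derivable1_diffP.
by apply: derivable_powR; rewrite in_itv /= x0.
Qed.

End RealFunctions.

Section Composition.
Context {R : realType} {Z : normedModType R}.
Variables (g : Z -> R) (Hg : Z -> Z -> R) (f f' : R -> R).

Lemma near_lipschitz_cvg (w : Z) (L : R) :
  (\forall h \near 0, `|g (w + h) - g w| <= L * `|h|) ->
  g (w + h) @[h --> 0] --> g w.
Proof.
move=> gL; apply/cvgrPdist_le => d d0; near=> h.
have hd : `|h| <= d / (`|L| + 1).
  by near: h; apply: nbhs0_le; rewrite divr_gt0 // ltr_wpDl.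
rewrite distrC; apply: le_trans (_ : L * `|h| <= _); first by near: h.
apply: le_trans (_ : (`|L| + 1) * `|h| <= _).
  by rewrite ler_wpM2r // (le_trans (ler_norm _)) // lerDl.
by rewrite mulrC -ler_pdivlMr // ltr_wpDl.
Unshelve. all: by end_near.
Qed.

Lemma newton_at_comp (w : Z) (L : R) :
  newton_at g Hg w -> (\forall h \near 0, `|g (w + h) - g w| <= L * `|h|) ->
  (\forall t \near g w, is_derive (t : R) 1 f (f' t)) -> {for g w, continuous f'} ->
  newton_at (f \o g) (fun u h => f' (g u) * Hg u h) w.
Proof.
move=> ng gL df cf e e0; set a := g w.
have g_cvg := near_lipschitz_cvg gL.
pose e1 := e / 2 / (`|L| + 1); pose e2 := e / 2 / (`|f' a| + 1).
have e10 : 0 < e1 by rewrite !divr_gt0 // ltr_wpDl.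
have e20 : 0 < e2 by rewrite !divr_gt0 // ltr_wpDl.
near=> h.
have Ef : `|f (g (w + h)) - f a - f' (g (w + h)) * (g (w + h) - a)|
    <= e1 * `|g (w + h) - a|.
  by near: h; exact: (g_cvg _ (derive_newton df cf e10)).
have Eg : `|g (w + h) - a - Hg (w + h) h| <= e2 * `|h| by near: h; exact: ng.
have Lh : `|g (w + h) - a| <= L * `|h| by near: h.
have f'b : `|f' (g (w + h))| <= `|f' a| + 1.
  near: h; apply: (g_cvg [set t | `|f' t| <= `|f' a| + 1]).
  move/cvgrPdist_le: cf => /(_ 1 ltr01); apply: filterS => t /=.
  by have := ler_distD (f' a) (f' t) 0; rewrite !subr0 distrC; lra.
rewrite /= (_ : _ - _ = f (g (w + h)) - f a - f' (g (w + h)) * (g (w + h) - a)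
  + f' (g (w + h)) * (g (w + h) - a - Hg (w + h) h)); last by ring.
apply: (le_trans (ler_normD _ _)); rewrite normrM.
have t1 : e1 * `|g (w + h) - a| <= e / 2 * `|h|.
  apply: le_trans (_ : e1 * ((`|L| + 1) * `|h|) <= _).
    apply: ler_wpM2l; first exact: ltW.
    apply: le_trans Lh _.
    by rewrite ler_wpM2r // (le_trans (ler_norm _)) // lerDl.
  by rewrite mulrA divfK // gt_eqF // ltr_wpDl.
have t2 : `|f' (g (w + h))| * `|g (w + h) - a - Hg (w + h) h| <= e / 2 * `|h|.
  apply: le_trans (ler_pM _ _ f'b Eg) _ => //.
  by rewrite mulrA [_ * e2]mulrC divfK // gt_eqF // ltr_wpDl.
lra.
Unshelve. all: by end_near.
Qed.

Lemma semismooth_comp (D : set Z) (z : Z) (U : set R) :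
  open U -> U (g z) ->
  (forall t, U t -> is_derive t 1 f (f' t)) ->
  (forall t, U t -> {for t, continuous f'}) ->
  semismooth_with D g z Hg ->
  semismooth_with D (f \o g) z (fun u h => f' (g u) * Hg u h).
Proof.
move=> oU Ugz df cf [Dz /locally_lipschitz_atP [e e0 [eD [L L0 gL]]] Hg_lin].
move=> /newton_derivative_nearP [N [oN Nz ND ng]].
set a := g z; pose K := `|f' a| + 1; have K0 : 0 < K by rewrite ltr_wpDl.
have [d d0 dU] : exists2 d, 0 < d & ball a d `<=` [set t | U t /\ `|f' t| <= K].
  apply/nbhs_ballP; near=> t; split; first by near: t; apply: open_nbhs_nbhs.
  near: t; move/cvgrPdist_le: (cf a Ugz) => /(_ 1 ltr01); apply: filterS => t /=.
  by have := ler_distD (f' a) (f' t) 0; rewrite !subr0 distrC /K; lra.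
have fK : K.-lipschitz_(ball a d) f.
  by apply: (derive_lipschitz (f' := f')) => t /dU [/df].
pose e' := Num.min e (d / (L + 1)).
have e'0 : 0 < e' by rewrite lt_min e0 divr_gt0 // ltr_wpDl.
have sub_e : ball z e' `<=` ball z e by apply: le_ball; rewrite ge_min lexx.
have gL' := klipschitzS sub_e gL.
have g_ball x : ball z e' x -> ball a d (g x).
  move=> zx; have := gL' (z, x) (conj (ballxx z e'0) zx).
  rewrite -!ball_normE /= in zx *; move=> /le_lt_trans; apply.
  apply: le_lt_trans (_ : L * e' < d); first by rewrite ler_wpM2l // ltW.
  apply: le_lt_trans (_ : L * (d / (L + 1)) < d).
    by rewrite ler_wpM2l // ge_min lexx orbT.
  by rewrite mulrA ltr_pdivrMr ?ltr_wpDl // mulrDr mulr1 mulrC ltrDl.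
split=> //.
- apply/locally_lipschitz_atP; exists e' => //; split; first by move=> x /sub_e /eD.
  exists (K * L); first by rewrite mulr_ge0 // ltW.
  exact: klipschitz_comp (ltW K0) fK gL' g_ball.
- by move=> w Dw; apply: bounded_linearZ; apply: Hg_lin.
apply/newton_derivative_nearP; exists (N `&` ball z e'); split.
- by apply: openI => //; apply: ball_open.
- by split=> //; apply: ballxx.
- by move=> x [/ND].
move=> w [Nw zw]; apply: newton_at_comp (ng w Nw) (klipschitz_near gL' zw) _ _.
  near=> t; apply: df; have /dU [] // : ball a d t.
  by near: t; apply: open_nbhs_nbhs; split; [apply: ball_open | apply: g_ball].
by apply: cf; have /dU [] := g_ball w zw.
Unshelve. all: by end_near.
Qed.

End Composition.

Section Norm.
Context {R : realType} {Z : normedModType R}.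
Local Notation N := (fun x : Z => `|x| : R).

Lemma norm_convex (y k : Z) (t : R) : 0 <= t -> t <= 1 ->
  `|y + t *: k| <= (1 - t) * `|y| + t * `|y + k|.
Proof.
move=> t0 t1.
have -> : y + t *: k = (1 - t) *: y + t *: (y + k).
  by rewrite scalerDr scalerBl scale1r addrA subrK.
apply: le_trans (ler_normD _ _) _.
by rewrite !normrZ !ger0_norm ?subr_ge0.
Qed.

Lemma diff_norm_le (y k : Z) : differentiable N y -> 'd N y k <= `|y + k| - `|y|.
Proof.
move=> dN; apply/ler_addgt0Pr => e e0.
have ek : 0 < e / (`|k| + 1) by rewrite divr_gt0 // ltr_wpDl.
have tk0 : (fun t : R => t *: k) @ 0 --> (0 : Z).
  by rewrite -(scale0r k); apply: cvgZr_tmp; apply: cvg_id.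
have /tk0 /nbhs_normP [d d0 Hd] := differentiable_approx dN ek.
pose t := Num.min (d / 2) 1.
have t0 : 0 < t by rewrite lt_min ltr01 divr_gt0.
have t1 : t <= 1 by rewrite ge_min lexx orbT.
have /Hd /= : ball 0 d t.
  rewrite -ball_normE /= sub0r normrN gtr0_norm //.
  apply: le_lt_trans (_ : t <= d / 2) _; first by rewrite ge_min lexx.
  by rewrite ltr_pdivrMr // ltr_pMr // ltr1n.
rewrite linearZ /= normrZ gtr0_norm // => /ler_normlP [+ _].
have := norm_convex y k (ltW t0) t1.
have ekk : e / (`|k| + 1) * `|k| <= e.
  by rewrite mulrAC ler_pdivrMr ?ltr_wpDl // ler_pM2l // lerDl.
set a := 'd _ y k; set b := `|y + t *: k| => bc bd.
have tek : t * (e / (`|k| + 1) * `|k|) <= t * e by rewrite ler_pM2l.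
move: bd; rewrite (_ : t *: a = t * a) // => bd.
rewrite -(ler_pM2l t0); lra.
Qed.

Lemma newton_at_norm (y : Z) : (forall x : Z, x != 0 -> differentiable N x) ->
  y != 0 -> newton_at N (fun u => 'd N u) y.
Proof.
move=> nd y0 e e0.
have e4 : 0 < e / 4 by rewrite divr_gt0.
have dy := differentiable_approx (nd y y0) e4.
have twice : (fun h : Z => h + h) @ 0 --> (0 : Z).
  by rewrite -[X in _ --> X](addr0 0); apply: cvgD.
near=> h.
have u0 : y + h != 0.
  near: h; apply/nbhs_norm0P; exists `|y|; first by rewrite /= normr_gt0.
  move=> h /= hy; apply: contraTneq hy => /eqP; rewrite addr_eq0 => /eqP ->.
  by rewrite normrN ltxx.
have b1 := diff_norm_le (- h) (nd _ u0); rewrite linearN addrK in b1.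
have b2 := diff_norm_le h (nd _ u0); rewrite -addrA in b2.
have E1 : `| `|y + h| - `|y| - 'd N y h| <= e / 4 * `|h|.
  by near: h; exact: dy.
have E2 : `| `|y + (h + h)| - `|y| - 'd N y (h + h)| <= e / 4 * `|h + h|.
  by near: h; exact: (twice _ dy).
rewrite linearD in E2; have := ler_normD h h.
move: E1 E2 b1 b2; rewrite !ler_norml => /andP[E1 E1'] /andP[E2 E2'].
have := normr_ge0 h; have := normr_ge0 (h + h); nra.
Unshelve. all: by end_near.
Qed.

Lemma semismooth_dist (D : set Z) (z r : Z) :
  (forall x : Z, x != 0 -> differentiable N x) ->
  open D -> D z -> z != r ->
  semismooth_with D (fun u => `|u - r| : R) z (fun u => 'd N (u - r)).
Proof.
move=> nd oD Dz zr.
have [e e0 eD] : exists2 e, 0 < e & ball z e `<=` D.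
  by apply/nbhs_ballP; apply: open_nbhs_nbhs.
split=> //.
- apply/locally_lipschitz_atP; exists e => //; split=> //; exists 1 => // -[x y] /= _.
  by rewrite mul1r; have := ler_dist_dist (x - r) (y - r); rewrite opprB addrA subrK.
- by move=> w _; split; [exact: linearP | exact: continuous_diff].
apply/newton_derivative_nearP; exists (D `&` ball z `|z - r|); split.
- by apply: openI => //; apply: ball_open.
- by split=> //; apply: ballxx; rewrite normr_gt0 subr_eq0.
- by move=> x [].
move=> w [_ zw] e' e'0; have wr : w - r != 0.
  by rewrite subr_eq0; apply/eqP => wr; move: zw; rewrite wr -ball_normE /= ltxx.
by apply: filterS (newton_at_norm nd wr e'0) => h /=; rewrite [w + h - r]addrAC.
Qed.

End Norm.

Theorem mainTheorem2 (R : realType) (Z V : completeNormedModType R)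
  (normZ_diff : forall x : Z, x != 0 -> differentiable (fun y : Z => `|y| : R) x)
  (D : set Z) (hD : open D) (r z : Z) (F : Z -> V) (HF : Z -> Z -> V)
  (zr : z != r) (p sigma : R) (hp : 1 <= p) (hs : 0 <= sigma) :
  semismooth_with D F z HF ->
  semismooth_with D (fun w => ((`|w - r| `^ p)^-1 + sigma) *: F w) z
    (fun w h => (sigma + (`|w - r| `^ p)^-1) *: HF w h
       - (p * ('d (fun y : Z => `|y| : R) (w - r) h) / `|w - r| `^ (p + 1))
         *: F w).
Proof.
move=> sF; have [Dz _ _ _] := sF.
have sM : semismooth_with D (fun u => (`|u - r| `^ p)^-1 + sigma) z
    (fun u h => - (p / `|u - r| `^ (p + 1)) * 'd (fun y : Z => `|y| : R) (u - r) h).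
  apply: (semismooth_comp (U := [set t | 0 < t])
    (f := fun t => (t `^ p)^-1 + sigma) (f' := fun t => - (p / t `^ (p + 1)))).
  - exact: open_gt.
  - by rewrite /= normr_gt0 subr_eq0.
  - exact: is_derive_powRV_add.
  - exact: continuous_powRV.
  - exact: semismooth_dist.
rewrite (_ : (fun w h : Z => _) = fun u h => ((`|u - r| `^ p)^-1 + sigma) *: HF u h
  + (- (p / `|u - r| `^ (p + 1)) * 'd (fun y : Z => `|y| : R) (u - r) h) *: F u).
  exact: semismooth_scale sM sF.
apply/funext => u; apply/funext => h.
by rewrite [_ + sigma]addrC mulNr scaleNr mulrAC.
Qed.
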